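(* Let $\hat A\in\mathbb{R}^{\hat n\times\hat n}$ and $\check A\in\mathbb{R}^{\check n\times\check n}$ be self-similarities of generic cut-and-project schemes $\hat\Lambda=(\hat{\mathcal{L}}\subset\mathbb{R}^{\hat s},\mathbb{R}^{\hat n})$ and $\check\Lambda=(\check{\mathcal{L}}\subset\mathbb{R}^{\check s},\mathbb{R}^{\check n})$, respectively. Then $A=\begin{pmatrix}\hat A&O\\O&\check A\end{pmatrix}$ is a self-similarity of the generic cut-and-project scheme $\Lambda=\hat\Lambda\oplus\check\Lambda$.
   Context: A lattice $\mathcal{L}\subset\mathbb{R}^s$ is $\{L\mathbf{r}:\mathbf{r}\in\mathbb{Z}^s\}$ for a non-singular $L\in\mathbb{R}^{s\times s}$ (an associated matrix). For $1\le n<s$ the scheme $(\mathcal{L}\subset\mathbb{R}^s,\mathbb{R}^n)$ has projections $\pi_\parallel(\mathbf{x})=(x_1,\dots,x_n)^\top$, $\pi_\perp(\mathbf{x})=(x_{n+1},\dots,x_s)^\top$; it is generic if $\pi_\parallel|_{\mathcal{L}}$, $\pi_\perp|_{\mathcal{L}}$ are injective and $\pi_\perp(\mathcal{L})$ is dense in $\mathbb{R}^{s-n}$. $A$ is a self-similarity of a generic scheme with associated matrix $L$ if $A\pi_\parallel(\mathcal{L})\subset\pi_\parallel(\mathcal{L})$ and there exist $C\in\mathbb{Z}^{s\times s}$, $B\in\mathbb{R}^{(s-n)\times(s-n)}$ with $\begin{pmatrix}A&O\\O&B\end{pmatrix}L=LC$. The direct sum $\hat\Lambda\oplus\check\Lambda$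 of schemes with associated matrices $\hat L,\check L$ is the scheme $(\mathcal{L}\subset\mathbb{R}^{\hat s+\check s},\mathbb{R}^{\hat n+\check n})$ whose lattice has associated matrix $L=P\begin{pmatrix}\hat L&O\\O&\check L\end{pmatrix}$, where $P=\begin{pmatrix}I_{\hat n}&O&O&O\\O&O&I_{\hat s-\hat n}&O\\O&I_{\check n}&O&O\\O&O&O&I_{\check s-\check n}\end{pmatrix}$. *)

From HB Require Import structures.
From mathcomp Require Import all_boot all_order all_algebra.
From mathcomp Require Import all_classical all_reals.
From mathcomp Require Import topology matrix_topology num_topology normedtype.
Set Implicit Arguments. Unset Strict Implicit. Unset Printing Implicit Defensive.
Import Order.TTheory GRing.Theory Num.Theory.
Import numFieldNormedType.Exports.
Local Open Scope ring_scope.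
Local Open Scope classical_set_scope.

(* A cut-and-project scheme (L \subset R^s, R^n) is encoded with s = n + m
   (m = s - n the internal dimension) and an associated matrix
   L : 'M[R]_(n + m). *)

Definition lattice (R : realType) (s : nat) (L : 'M[R]_s) : set 'cV[R]_s :=
  [set L *m map_mx (fun z : int => z%:~R) r | r in [set: 'cV[int]_s]].

Definition pi_par (R : realType) (n m : nat) (x : 'cV[R]_(n + m)) : 'cV[R]_n :=
  usubmx x.
Definition pi_perp (R : realType) (n m : nat) (x : 'cV[R]_(n + m)) : 'cV[R]_m :=
  dsubmx x.

Definition generic_scheme (R : realType) (n m : nat) (L : 'M[R]_(n + m)) :=
  [/\ [/\ (0 < n)%N, (0 < m)%N & L \in unitmx],
      {in lattice L &, injective (@pi_par R n m)},
      {in lattice L &, injective (@pi_perp R n m)} &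
      dense (@pi_perp R n m @` lattice L)].

Definition self_similarity (R : realType) (n m : nat) (L : 'M[R]_(n + m))
    (A : 'M[R]_n) :=
  [/\ generic_scheme L,
      (fun y => A *m y) @` (@pi_par R n m @` lattice L)
         `<=` (@pi_par R n m @` lattice L) &
      exists (C : 'M[int]_(n + m)) (B : 'M[R]_m),
        block_mx A 0 0 B *m L = L *m map_mx (fun z : int => z%:~R) C].

(* The permutation matrix P of the direct sum.  Row blocks:
   n1, n2, m1, m2 (i.e. (n1+n2)+(m1+m2));  column blocks: n1, m1, n2, m2
   (i.e. (n1+m1)+(n2+m2), matching diag(L1, L2)). *)
Definition dsum_P (R : realType) (n1 m1 n2 m2 : nat)
  : 'M[R]_((n1 + n2) + (m1 + m2), (n1 + m1) + (n2 + m2)) :=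
  col_mx
    (col_mx (row_mx (row_mx 1%:M 0) 0) (row_mx 0 (row_mx 1%:M 0)))
    (col_mx (row_mx (row_mx 0 1%:M) 0) (row_mx 0 (row_mx 0 1%:M))).

(* associated matrix P * diag(L1, L2) of the direct sum; the column index
   set (n1+m1)+(n2+m2) is identified with (n1+n2)+(m1+m2) by castmx
   (this only renames the standard basis of Z^s, not the lattice). *)
Definition dsum_mx (R : realType) (n1 m1 n2 m2 : nat)
    (L1 : 'M[R]_(n1 + m1)) (L2 : 'M[R]_(n2 + m2))
  : 'M[R]_((n1 + n2) + (m1 + m2)) :=
  castmx (erefl _, addnACA n1 m1 n2 m2)
    (dsum_P R n1 m1 n2 m2 *m block_mx L1 0 0 L2).

From HB Require Import structures.
From mathcomp Require Import all_boot all_order all_algebra.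
From mathcomp Require Import all_classical all_reals.
From mathcomp Require Import topology matrix_topology num_topology normedtype.
Import numFieldNormedType.Exports.
Import GRing.Theory.
Local Open Scope ring_scope.
Local Open Scope classical_set_scope.

Set Implicit Arguments. Unset Strict Implicit. Unset Printing Implicit Defensive.

(* Up to the reindexing of coordinates by P, the lattice of the direct sum
   is the product of the two lattices: its points are the interleavings of a
   point of each, so both projections act componentwise.  Injectivity of the
   projections, density of the internal projection, invariance of the
   physical projection and the intertwining relation therefore all hold
   factorwise; the integer matrix for the sum is diag(C1, C2), reindexed like
   the lattice basis. *)

Lemma mulmx_castmx (R : pzSemiRingType) m m' n n' p (em : m = m') (en : n = n')
    (A : 'M[R]_(m, n)) (B : 'M[R]_(n, p)) :
  castmx (em, en) A *m castmx (en, erefl p) B = castmx (em, erefl p) (A *m B).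
Proof. by case: m' / em; case: n' / en; rewrite !castmx_id. Qed.

Lemma dense_image2_col_mx (R : numFieldType) m n
    (A : set 'cV[R]_m) (B : set 'cV[R]_n) :
  dense A -> dense B -> dense [set col_mx a b | a in A & b in B].
Proof.
move=> dA dB O [z Oz] oO.
have /nbhs_ballP[r r0 zrO] : nbhs z O by apply: open_nbhs_nbhs.
have [a [[_ za] Aa]] := dA _ (ex_intro _ _ (ballxx (usubmx z) r0)) (ball_open _ _).
have [b [[_ zb] Bb]] := dB _ (ex_intro _ _ (ballxx (dsubmx z) r0)) (ball_open _ _).
exists (col_mx a b); split; last by exists a => //; exists b.
apply: zrO; split=> // i j; rewrite -[z]vsubmxK -[i]splitK.
by case: (fintype.split i) => k; rewrite ?col_mxEu ?col_mxEd.
Qed.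

Section Interleave.
Variables (R : pzRingType) (n1 m1 n2 m2 p : nat).
Implicit Types (X : 'M[R]_(n1 + m1, p)) (Y : 'M[R]_(n2 + m2, p)).

(* [interleave X Y] is [dsum_P *m col_mx X Y]: the row blocks
   (par X, perp X, par Y, perp Y) are reordered as (par X, par Y, perp X, perp Y). *)
Definition interleave X Y : 'M[R]_((n1 + n2) + (m1 + m2), p) :=
  col_mx (col_mx (usubmx X) (usubmx Y)) (col_mx (dsubmx X) (dsubmx Y)).

Lemma interleave_eq0 X Y : interleave X Y = 0 -> X = 0 /\ Y = 0.
Proof.
move=> /eqP; rewrite !col_mx_eq0 => /andP[/andP[uX uY] /andP[dX dY]].
by rewrite -[X]vsubmxK -[Y]vsubmxK (eqP uX) (eqP uY) (eqP dX) (eqP dY) !col_mx0.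
Qed.

Lemma mul_block_diag_interleave (A1 : 'M[R]_n1) (A2 : 'M[R]_n2)
    (B1 : 'M[R]_m1) (B2 : 'M[R]_m2) X Y :
  block_mx (block_mx A1 0 0 A2) 0 0 (block_mx B1 0 0 B2) *m interleave X Y =
  interleave (block_mx A1 0 0 B1 *m X) (block_mx A2 0 0 B2 *m Y).
Proof.
rewrite -[X]vsubmxK -[Y]vsubmxK /interleave !col_mxKu !col_mxKd.
by rewrite !mul_block_col !mul0mx !addr0 !add0r !col_mxKu !col_mxKd.
Qed.

End Interleave.

Lemma castmx_addnACAK (T : Type) n1 m1 n2 m2 p
    (V : 'M[T]_((n1 + n2) + (m1 + m2), p)) :
  castmx (addnACA n1 m1 n2 m2, erefl p)
    (castmx (esym (addnACA n1 m1 n2 m2), erefl p) V) = V.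
Proof. exact: (castmxKV _ (erefl p)). Qed.

Section DirectSum.
Variables (R : realType) (n1 m1 n2 m2 : nat).
Variables (L1 : 'M[R]_(n1 + m1)) (L2 : 'M[R]_(n2 + m2)).
Local Notation e := (addnACA n1 m1 n2 m2).
Local Notation intr := (fun z : int => z%:~R).

Lemma mul_dsum_mx p (V : 'M[R]_((n1 + m1) + (n2 + m2), p)) :
  dsum_mx L1 L2 *m castmx (e, erefl p) V =
  interleave (L1 *m usubmx V) (L2 *m dsubmx V).
Proof.
rewrite /dsum_mx mulmx_castmx castmx_id -mulmxA -[V in LHS]vsubmxK.
rewrite mul_block_col !mul0mx addr0 add0r.
set X := L1 *m _; set Y := L2 *m _.
rewrite -[X]vsubmxK -[Y]vsubmxK /dsum_P /interleave !mul_col_mx !mul_row_col.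
by rewrite !mul1mx !mul0mx !addr0 !add0r !col_mxKu !col_mxKd.
Qed.

Lemma dsum_mx_unit : L1 \in unitmx -> L2 \in unitmx -> dsum_mx L1 L2 \in unitmx.
Proof.
move=> U1 U2; rewrite -unitmx_tr -row_free_unit; apply: inj_row_free => v.
move=> /(congr1 trmx); rewrite trmx_mul trmxK trmx0 -[v^T]castmx_addnACAK.
rewrite mul_dsum_mx => /interleave_eq0[/(congr1 (mulmx (invmx L1)))].
rewrite mulKmx // mulmx0 => V1 /(congr1 (mulmx (invmx L2))).
rewrite mulKmx // mulmx0 => V2.
apply: trmx_inj; rewrite -[v^T]castmx_addnACAK.
by rewrite -[castmx _ v^T]vsubmxK V1 V2 col_mx0 castmx_const trmx0.
Qed.

Lemma lattice_dsum_mx :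
  lattice (dsum_mx L1 L2) =
  [set interleave y1 y2 | y1 in lattice L1 & y2 in lattice L2].
Proof.
apply/seteqP; split=> x.
  case=> r _ <-; rewrite -[r]castmx_addnACAK map_castmx mul_dsum_mx.
  exists (L1 *m usubmx (map_mx intr (castmx (esym e, erefl 1%N) r))).
    by exists (usubmx (castmx (esym e, erefl 1%N) r)); rewrite ?map_usubmx.
  exists (L2 *m dsubmx (map_mx intr (castmx (esym e, erefl 1%N) r))) => //.
  by exists (dsubmx (castmx (esym e, erefl 1%N) r)); rewrite ?map_dsubmx.
case=> _ [r1 _ <-] [_ [r2 _ <-] <-].
exists (castmx (e, erefl 1%N) (col_mx r1 r2)) => //.
by rewrite map_castmx mul_dsum_mx map_col_mx col_mxKu col_mxKd.
Qed.

Lemma pi_par_interleave (y1 : 'cV[R]_(n1 + m1)) (y2 : 'cV[R]_(n2 + m2)) :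
  pi_par (interleave y1 y2) = col_mx (pi_par y1) (pi_par y2).
Proof. exact: col_mxKu. Qed.

Lemma pi_perp_interleave (y1 : 'cV[R]_(n1 + m1)) (y2 : 'cV[R]_(n2 + m2)) :
  pi_perp (interleave y1 y2) = col_mx (pi_perp y1) (pi_perp y2).
Proof. exact: col_mxKd. Qed.

Lemma pi_par_lattice_dsum_mx :
  @pi_par R _ _ @` lattice (dsum_mx L1 L2) =
  [set col_mx a1 a2 | a1 in @pi_par R _ _ @` lattice L1
                    & a2 in @pi_par R _ _ @` lattice L2].
Proof.
rewrite lattice_dsum_mx; apply/seteqP; split=> x.
  case=> _ [y1 ly1 [y2 ly2 <-]] <-; rewrite pi_par_interleave.
  by exists (pi_par y1); [exists y1 | exists (pi_par y2); [exists y2 |]].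
case=> _ [y1 ly1 <-] [_ [y2 ly2 <-] <-].
exists (interleave y1 y2); last exact: pi_par_interleave.
by exists y1 => //; exists y2.
Qed.

Lemma pi_perp_lattice_dsum_mx :
  @pi_perp R _ _ @` lattice (dsum_mx L1 L2) =
  [set col_mx a1 a2 | a1 in @pi_perp R _ _ @` lattice L1
                    & a2 in @pi_perp R _ _ @` lattice L2].
Proof.
rewrite lattice_dsum_mx; apply/seteqP; split=> x.
  case=> _ [y1 ly1 [y2 ly2 <-]] <-; rewrite pi_perp_interleave.
  by exists (pi_perp y1); [exists y1 | exists (pi_perp y2); [exists y2 |]].
case=> _ [y1 ly1 <-] [_ [y2 ly2 <-] <-].
exists (interleave y1 y2); last exact: pi_perp_interleave.
by exists y1 => //; exists y2.
Qed.

Lemma pi_par_dsum_mx_inj :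
  {in lattice L1 &, injective (@pi_par R n1 m1)} ->
  {in lattice L2 &, injective (@pi_par R n2 m2)} ->
  {in lattice (dsum_mx L1 L2) &, injective (@pi_par R _ _)}.
Proof.
move=> inj1 inj2 x y; rewrite !in_setE lattice_dsum_mx.
move=> [a1 la1 [a2 la2 <-]] [b1 lb1 [b2 lb2 <-]].
rewrite !pi_par_interleave => /eq_col_mx[e1 e2].
by rewrite (inj1 a1 b1) ?in_setE // (inj2 a2 b2) ?in_setE.
Qed.

Lemma pi_perp_dsum_mx_inj :
  {in lattice L1 &, injective (@pi_perp R n1 m1)} ->
  {in lattice L2 &, injective (@pi_perp R n2 m2)} ->
  {in lattice (dsum_mx L1 L2) &, injective (@pi_perp R _ _)}.
Proof.
move=> inj1 inj2 x y; rewrite !in_setE lattice_dsum_mx.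
move=> [a1 la1 [a2 la2 <-]] [b1 lb1 [b2 lb2 <-]].
rewrite !pi_perp_interleave => /eq_col_mx[e1 e2].
by rewrite (inj1 a1 b1) ?in_setE // (inj2 a2 b2) ?in_setE.
Qed.

Lemma generic_scheme_dsum_mx :
  generic_scheme L1 -> generic_scheme L2 -> generic_scheme (dsum_mx L1 L2).
Proof.
move=> [[n1p m1p U1] par1 perp1 d1] [[n2p m2p U2] par2 perp2 d2]; split.
- by rewrite !addn_gt0 n1p m1p dsum_mx_unit.
- exact: pi_par_dsum_mx_inj.
- exact: pi_perp_dsum_mx_inj.
- by rewrite pi_perp_lattice_dsum_mx; apply: dense_image2_col_mx.
Qed.

Lemma block_diag_pi_par_lattice_dsum_mx (A1 : 'M[R]_n1) (A2 : 'M[R]_n2) :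
  (fun y => A1 *m y) @` (@pi_par R n1 m1 @` lattice L1)
    `<=` @pi_par R n1 m1 @` lattice L1 ->
  (fun y => A2 *m y) @` (@pi_par R n2 m2 @` lattice L2)
    `<=` @pi_par R n2 m2 @` lattice L2 ->
  (fun y => block_mx A1 0 0 A2 *m y)
      @` (@pi_par R _ (m1 + m2) @` lattice (dsum_mx L1 L2))
    `<=` @pi_par R _ (m1 + m2) @` lattice (dsum_mx L1 L2).
Proof.
move=> sub1 sub2; rewrite pi_par_lattice_dsum_mx => _ [_ [a1 la1 [a2 la2 <-]] <-].
rewrite mul_block_col !mul0mx addr0 add0r.
exists (A1 *m a1); first by apply: sub1; exists a1.
by exists (A2 *m a2); first by apply: sub2; exists a2.
Qed.

Lemma block_diag_mul_dsum_mx (A1 : 'M[R]_n1) (A2 : 'M[R]_n2)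
    (B1 : 'M[R]_m1) (B2 : 'M[R]_m2)
    (C1 : 'M[int]_(n1 + m1)) (C2 : 'M[int]_(n2 + m2)) :
  block_mx A1 0 0 B1 *m L1 = L1 *m map_mx intr C1 ->
  block_mx A2 0 0 B2 *m L2 = L2 *m map_mx intr C2 ->
  block_mx (block_mx A1 0 0 A2) 0 0 (block_mx B1 0 0 B2) *m dsum_mx L1 L2 =
  dsum_mx L1 L2 *m map_mx intr (castmx (e, e) (block_mx C1 0 0 C2)).
Proof.
move=> E1 E2; rewrite -[LHS]mulmx1 -[RHS]mulmx1 -(castmx_addnACAK 1%:M).
set W := castmx _ 1%:M.
rewrite -mulmxA mul_dsum_mx mul_block_diag_interleave !mulmxA E1 E2.
rewrite map_castmx -mulmxA mulmx_castmx mul_dsum_mx map_block_mx !map_mx0.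
rewrite -[W in RHS]vsubmxK mul_block_col !mul0mx addr0 add0r.
by rewrite col_mxKu col_mxKd -!mulmxA.
Qed.

End DirectSum.

Theorem lemma5 (R : realType) (n1 m1 n2 m2 : nat)
  (L1 : 'M[R]_(n1 + m1)) (L2 : 'M[R]_(n2 + m2))
  (A1 : 'M[R]_n1) (A2 : 'M[R]_n2) :
  self_similarity L1 A1 -> self_similarity L2 A2 ->
  self_similarity (dsum_mx L1 L2) (block_mx A1 0 0 A2).
Proof.
move=> [G1 sub1 [C1 [B1 E1]]] [G2 sub2 [C2 [B2 E2]]]; split.
- exact: generic_scheme_dsum_mx.
- exact: block_diag_pi_par_lattice_dsum_mx.
- exists (castmx (addnACA n1 m1 n2 m2, addnACA n1 m1 n2 m2) (block_mx C1 0 0 C2)).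
  by exists (block_mx B1 0 0 B2); apply: block_diag_mul_dsum_mx.
Qed.
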